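(* The symmetric algebra $\mathrm{Sym}(V)$ is a self-dual Hopf algebra under the Hopf pairing determined by $$\left\langle \frac{\deg(v_\alpha)!}{\sqrt{z_\alpha}}\,\overline{v_\alpha},\ \frac{\deg(v_\beta)!}{\sqrt{z_\beta}}\,\overline{v_\beta}\right\rangle=\delta_{\mathrm{sort}(\alpha),\mathrm{sort}(\beta)}$$ for all compositions $\alpha,\beta$.
   Context: $V$ is a graded vector space with a fixed countable homogeneous basis $\{v_1,v_2,\dots\}$, each $\deg(v_i)$ a positive integer and only finitely many $v_i$ of each degree. For a composition (finite sequence of positive integers) $\alpha=(\alpha_1,\dots,\alpha_\ell)$, write $v_\alpha=v_{\alpha_1}\otimes\cdots\otimes v_{\alpha_\ell}$ in the tensor algebra $\mathrm{T}(V)=\bigoplus_n V^{\otimes n}$, whose Hopf structure has the $v_i$ primitive and the concatenation product. $\mathrm{Sym}(V)=\mathrm{T}(V)/I(V)$ where $I(V)$ is the two-sided ideal generated by all $v_iv_j-v_jv_i$; it is a graded commutative and cocommutative Hopf algebra (the $\overline{v_i}$ primitive), $\overline{v_\alpha}$ denotes the class of $v_\alpha$, and $\deg(\overline{v_\alpha})=\sum_i\deg(v_{\alpha_i})$. Notation: $\deg(v_\alpha)!=\deg(v_{\alpha_1})!\cdots\deg(v_{\alpha_\ell})!$; $\mathrm{sort}(\alpha)$ is the rearrangement of the parts of $\alpha$ in decreasing order; $z_\alpha=\prod_{i\ge1}m_i!\,i^{m_i}$ where $m_i=|\{k:\alpha_k=i\}|$. *)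

From HB Require Import structures.
From mathcomp Require Import all_boot all_order all_algebra.
From mathcomp Require Import finmap monalg.

Set Implicit Arguments.
Unset Strict Implicit.
Unset Printing Implicit Defensive.

Import GRing.Theory Num.Theory.

Local Open Scope ring_scope.

(* Indices of the basis vectors v_1, v_2, ... of V: positive integers. *)
Definition posnat := {n : nat | (0 < n)%N}.

Definition composition := seq posnat.

(* Sym(V) = free commutative algebra on the v_i,
   i.e. the R-span of these monomials, with concatenation-induced product. *)
Notation monom := {cmonom posnat}.

Definition Sym (R : comNzRingType) := {malg R[monom]}.

Definition vgen (R : comNzRingType) (i : posnat) : Sym R := << ucm i >>.

Definition vbar (R : comNzRingType) (alpha : composition) : Sym R :=
  \prod_(i <- alpha) vgen R i.

Definition monom2 := (monom * monom)%type.
HB.instance Definition _ := Choice.on monom2.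

Section Monom2.
Definition one2 : monom2 := (@mone monom, @mone monom).
Definition mul2 (x y : monom2) : monom2 := (mmul x.1 y.1, mmul x.2 y.2).
Fact mul2A : associative mul2.
Proof. by move=> [a b] [c d] [e f]; rewrite /mul2 /= !mulmA. Qed.
Fact mul12 : left_id one2 mul2.
Proof. by move=> [a b]; rewrite /mul2 /= !mul1m. Qed.
Fact mul21 : right_id one2 mul2.
Proof. by move=> [a b]; rewrite /mul2 /= !mulm1. Qed.
Fact unit2 (x y : monom2) : mul2 x y = one2 -> x = one2 /\ y = one2.
Proof.
case: x y => [a b] [c d] [/unitm [-> ->] /unitm [-> ->]]; by [].
Qed.
HB.instance Definition _ := Choice_isMonomialDef.Build monom2
  mul2A mul12 mul21 unit2.
Fact mul2C : commutative mul2.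
Proof. by move=> [a b] [c d]; rewrite /mul2 /= (mulmC a) (mulmC b). Qed.
HB.instance Definition _ := MonomialDef_isConomialDef.Build monom2 mul2C.
End Monom2.

(* Sym(V) (x) Sym(V), with basis the pure tensors m1 (x) m2 of monomials. *)
Definition Sym2 (R : comNzRingType) := {malg R[monom2]}.

Definition mono (R : comNzRingType) (m : monom) : Sym R := << m >>.

Definition tens (R : comNzRingType) (m1 m2 : monom) : Sym2 R := << (m1, m2) >>.

Definition prim_image (R : comNzRingType) (i : posnat) : Sym2 R :=
  tens R (ucm i) (@mone monom) + tens R (@mone monom) (ucm i).

Definition cop_monom (R : comNzRingType) (m : monom) : Sym2 R :=
  \prod_(i <- finmap.enum_fset (finmap.finsupp m)) prim_image R i ^+ (m i).

Definition coproduct (R : comNzRingType) (x : Sym R) : Sym2 R :=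
  \sum_(m <- finmap.enum_fset (msupp x)) x@_m *: cop_monom R m.

(* Counit: the algebra morphism with epsilon(v_i) = 0, i.e. constant term. *)
Definition counit (R : comNzRingType) (x : Sym R) : R := x@_(@mone monom).

Definition bilin_form (R : comNzRingType) (B : Sym R -> Sym R -> R) :=
  (forall (a : R) x x' y, B (a *: x + x') y = a * B x y + B x' y) /\
  (forall (a : R) x y y', B x (a *: y + y') = a * B x y + B x y').

(* <x (x) y, t> for t in Sym(V)(x)Sym(V), where <a(x)b, c(x)d> = B a c * B b d *)
Definition pair2_left (R : comNzRingType) (B : Sym R -> Sym R -> R)
    (x y : Sym R) (t : Sym2 R) : R :=
  \sum_(k <- finmap.enum_fset (msupp t)) t@_k * (B x (mono R k.1) * B y (mono R k.2)).

Definition pair2_right (R : comNzRingType) (B : Sym R -> Sym R -> R)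
    (t : Sym2 R) (x y : Sym R) : R :=
  \sum_(k <- finmap.enum_fset (msupp t)) t@_k * (B (mono R k.1) x * B (mono R k.2) y).

Definition hopf_pairing (R : comNzRingType) (B : Sym R -> Sym R -> R) :=
  [/\ forall x y z, B (x * y) z = pair2_left B x y (coproduct z),
      forall x y z, B x (y * z) = pair2_right B (coproduct x) y z,
      forall z, B 1 z = counit z &
      forall x, B x 1 = counit x].

Definition nondeg_pairing (R : comNzRingType) (B : Sym R -> Sym R -> R) :=
  (forall x, (forall y, B x y = 0) -> x = 0) /\
  (forall y, (forall x, B x y = 0) -> y = 0).

Definition mdegree (deg : posnat -> nat) (m : monom) : nat :=
  (\sum_(i <- finmap.enum_fset (finmap.finsupp m)) m i * deg i)%N.

Definition homogeneous (R : comNzRingType) (deg : posnat -> nat) (n : nat)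
    (x : Sym R) :=
  forall m, m \in msupp x -> mdegree deg m = n.

Definition graded_pairing (R : comNzRingType) (deg : posnat -> nat)
    (B : Sym R -> Sym R -> R) :=
  forall n n' x y, homogeneous deg n x -> homogeneous deg n' y ->
    n <> n' -> B x y = 0.

Definition deg_fact (deg : posnat -> nat) (alpha : composition) : nat :=
  (\prod_(i <- alpha) (deg i)`!)%N.

Definition zee (alpha : composition) : nat :=
  (\prod_(i <- undup alpha) ((count_mem i alpha)`! * (val i) ^ (count_mem i alpha)))%N.

Definition sortc (alpha : composition) : seq nat :=
  sort (fun a b : nat => b <= a)%N (map val alpha).

Definition nvbar (R : rcfType) (deg : posnat -> nat) (alpha : composition)
    : Sym R :=
  ((deg_fact deg alpha)%:R / Num.sqrt (zee alpha)%:R) *: vbar R alpha.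

Definition grading_ok (deg : posnat -> nat) :=
  (forall i, (0 < deg i)%N) /\
  (forall d, exists N, forall i, deg i = d -> (val i <= N)%N).

(* In the monomial basis of Sym(V) the pairing is diagonal,
     <v^a, v^b> = [a = b] w(a),   w(a) = prod_i a_i! c_i^(a_i).
   Such a form is a Hopf pairing whatever the weights c_i: the coefficient of
   v^a (x) v^b in Delta(v^m) is prod_i binom(m_i, a_i), so that
   <v^a (x) v^b, Delta(v^m)> = [a b = m] w(m) = <v^a v^b, v^m>.
   The weights c_i = i / deg(v_i)!^2 give w(v_alpha) = z_alpha / deg(v_alpha)!^2,
   i.e. they make the normalised elements orthonormal.  Conversely every
   monomial is a nonzero multiple of a normalised element, so the prescribed
   values determine a bilinear form, which is therefore this diagonal one;
   it is nondegenerate and graded because it is diagonal with nonzero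
   weights. *)

From HB Require Import structures.
From mathcomp Require Import all_boot all_order all_algebra.
From mathcomp Require Import finmap monalg.
From mathcomp Require Import ring zify.
From Stdlib Require Import FunctionalExtensionality.

Set Implicit Arguments.
Unset Strict Implicit.
Unset Printing Implicit Defensive.

Import Order.TTheory GRing.Theory Num.Theory.

Local Open Scope ring_scope.

Section LinearForms.
Variables (R : comNzRingType) (V : lmodType R) (f : V -> R).
Hypothesis f_linear : linear_for *%R f.

Lemma linear_for0 : f 0 = 0.
Proof.
apply: (addrI (f 0)).
by have := f_linear 1 0 0; rewrite scaler0 addr0 mul1r addr0 => <-.
Qed.

Lemma linear_forD : {morph f : x y / x + y}.
Proof. by move=> x y; rewrite -[x in LHS]scale1r f_linear mul1r. Qed.

End LinearForms.

Section MalgLinearForms.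
Variables (R : comNzRingType) (K : choiceType).
Implicit Types (x : {malg R[K]}) (f g : {malg R[K]} -> R).

Lemma linear_malgE f : linear_for *%R f ->
  forall x, f x = \sum_(k <- msupp x) x@_k * f << k >>.
Proof.
move=> lf x; rewrite {1}(monalgE x) (big_morph f (linear_forD lf) (linear_for0 lf)).
apply: eq_bigr => k _; rewrite -(scalable_linear lf); congr (f _).
by apply/malgP => k'; rewrite mcoeffZ !mcoeffU mulr_natr.
Qed.

Lemma linear_malg_eq f g : linear_for *%R f -> linear_for *%R g ->
  (forall k, f << k >> = g << k >>) -> f =1 g.
Proof.
move=> lf lg fg x; rewrite (linear_malgE lf) (linear_malgE lg).
by apply: eq_bigr => k _; rewrite fg.
Qed.

Lemma mmap_linear (h : K -> R) : linear_for *%R (mmap idfun h).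
Proof.
move=> a x y /=; set S := (msupp x `|` msupp y)%fset.
have le_xyS : (msupp (a *: x + y) `<=` S)%fset.
  by apply: fsubset_trans (msuppD_le _ _) _; apply: fsetUSS => //; apply: msuppZ_le.
rewrite (mmapEw le_xyS) (mmapEw (fsubsetUl (msupp x) (msupp y))).
rewrite (mmapEw (fsubsetUr (msupp x) (msupp y))).
rewrite mulr_sumr -big_split /=; apply: eq_bigr => k _.
by rewrite mcoeffD mcoeffZ mulrDl mulrA.
Qed.

Lemma mmap_delta (k0 : K) (h : K -> R) x :
  mmap idfun (fun k => (k == k0)%:R * h k) x = x@_k0 * h k0.
Proof.
rewrite (mmapEw (fsubsetUl (msupp x) [fset k0]%fset)).
rewrite (big_fsetD1 k0) ?in_fsetU ?in_fset1 ?eqxx ?orbT //=.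
rewrite mul1r big1_fset ?addr0 // => k; rewrite in_fsetD1 => /andP[/negbTE-> _] _.
by rewrite mul0r mulr0.
Qed.

End MalgLinearForms.

Lemma malgUM (K : monomType) (R : nzRingType) (a b : K) :
  (<< a >> : {malg R[K]}) * << b >> = << mmul a b >>.
Proof. by rewrite malgM_def fgmulUU mulr1. Qed.

Section CmonomUnits.
Variable I : choiceType.
Implicit Types (a b m x y z : cmonom I) (i : I).

Lemma divcmUK a i : (0 < a i)%N -> mmul (divcm a (ucm i)) (ucm i) = a.
Proof.
move=> a_i; apply/eqP/cmP => j; rewrite cmM divcmE cmU.
by case: eqP => [<-|_]; rewrite ?subnK ?subn0 ?addn0.
Qed.

Lemma divcmU_succ a i : (0 < a i)%N -> (divcm a (ucm i) i).+1 = a i.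
Proof. by move=> a_i; rewrite divcmE cmU eqxx; lia. Qed.

Lemma mulmU_eq x a i :
  (mmul x (ucm i) == a) = (0 < a i)%N && (x == divcm a (ucm i)).
Proof.
apply/eqP/andP => [<-|[a_i /eqP ->]]; last exact: divcmUK.
split; first by rewrite cmM cmU eqxx addn1.
by apply/cmP => j; rewrite divcmE cmM cmU addnK.
Qed.

Lemma mulmU_cancel x y z i :
  (mmul (mmul x (ucm i)) y == mmul z (ucm i)) = (mmul x y == z).
Proof. by apply/cmP/cmP => h j; move: (h j); rewrite !cmM cmU; lia. Qed.

Lemma eq_divcmU_mull a b z i : (0 < a i)%N ->
  (mmul (divcm a (ucm i)) b == z) = (mmul a b == mmul z (ucm i)).
Proof. by move=> a_i; rewrite -{2}(divcmUK a_i) mulmU_cancel. Qed.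

Lemma eq_divcmU_mulr a b z i : (0 < b i)%N ->
  (mmul a (divcm b (ucm i)) == z) = (mmul a b == mmul z (ucm i)).
Proof. by move=> b_i; rewrite mulmC eq_divcmU_mull // mulmC. Qed.

Lemma cmonom_ind (P : cmonom I -> Prop) :
  P mone -> (forall m i, P m -> P (mmul m (ucm i))) -> forall m, P m.
Proof.
move=> P1 PU m; elim: {m}(mdeg m) {-2}m (erefl (mdeg m)) => [|n IHn] m deg_m.
  by rewrite (mdeg_eq0I deg_m).
have [supp0|[i i_m]] := fset_0Vmem (finsupp m).
  suff m1 : m = mone by move: deg_m; rewrite m1 mdeg1.
  by apply/eqP/cmP => j; rewrite cm1; apply/eqP; rewrite cmE_eq0 supp0.
have m_i : (0 < m i)%N by rewrite lt0n cmE_neq0.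
rewrite -(divcmUK m_i); apply/PU/IHn.
by move: deg_m; rewrite -{1}(divcmUK m_i) mdegM mdegU addn1 => -[].
Qed.

End CmonomUnits.

Section CmonomOfSeq.
Variable I : choiceType.
Implicit Types (s t : seq I).

Definition cmonom_of_seq s : cmonom I := \big[mmul/mone]_(i <- s) ucm i.

Lemma cmonom_of_seq_cons i s : cmonom_of_seq (i :: s) = mmul (ucm i) (cmonom_of_seq s).
Proof. by rewrite /cmonom_of_seq big_cons. Qed.

Lemma cmonom_of_seqE s j : cmonom_of_seq s j = count_mem j s.
Proof.
elim: s => [|i s IHs]; first by rewrite /cmonom_of_seq big_nil cm1.
by rewrite cmonom_of_seq_cons cmM cmU IHs.
Qed.

Lemma eq_cmonom_of_seq s t : (cmonom_of_seq s == cmonom_of_seq t) = perm_eq s t.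
Proof.
apply/cmP/idP => [eq_st|/permP eq_st j]; last by rewrite !cmonom_of_seqE eq_st.
by apply/allP => j _ /=; rewrite -!cmonom_of_seqE eq_st.
Qed.

Lemma perm_undup_finsupp s : perm_eq (undup s) (finsupp (cmonom_of_seq s)).
Proof.
apply: uniq_perm; [exact: undup_uniq | exact: fset_uniq | move=> j].
have -> : (j \in enum_fset (finsupp (cmonom_of_seq s))) = (j \in finsupp (cmonom_of_seq s)).
  by [].
by rewrite mem_undup -cmE_neq0 cmonom_of_seqE -lt0n -has_count has_pred1.
Qed.

Lemma cmonom_of_seq_surj m : exists s, m = cmonom_of_seq s.
Proof.
elim/cmonom_ind: m => [|m i [s ->]]; first by exists [::]; rewrite /cmonom_of_seq big_nil.
by exists (i :: s); rewrite cmonom_of_seq_cons mulmC.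
Qed.

End CmonomOfSeq.

Section FinsuppProducts.
Variables (I : choiceType) (S : comNzSemiRingType) (F : I -> nat -> S).
Hypothesis F0 : forall j, F j 0 = 1.

Lemma prod_finsuppEw (m : cmonom I) (A : {fset I}) : (finsupp m `<=` A)%fset ->
  \prod_(j <- finsupp m) F j (m j) = \prod_(j <- A) F j (m j).
Proof.
move=> le_mA; apply: big_fset_incl => // j _.
by rewrite -cmE_eq0 => /eqP ->; rewrite F0.
Qed.

Lemma prod_finsuppMU (g : nat -> S) (m : cmonom I) i :
  (forall n, F i n.+1 = g n * F i n) ->
  \prod_(j <- finsupp (mmul m (ucm i))) F j (mmul m (ucm i) j)
    = g (m i) * \prod_(j <- finsupp m) F j (m j).
Proof.
move=> FS; set A := (finsupp m `|` [fset i])%fset.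
have iA : i \in A by rewrite in_fsetU in_fset1 eqxx orbT.
rewrite (prod_finsuppEw (m := mmul m (ucm i)) (A := A)); last by rewrite mdomD mdomU.
rewrite (prod_finsuppEw (fsubsetUl (finsupp m) [fset i]%fset)) !(big_fsetD1 i iA) /= cmM cmU eqxx addn1.
rewrite FS mulrA; congr (_ * _); apply: eq_big_seq => j.
by rewrite in_fsetD1 => /andP[ne_ji _]; rewrite cmM cmU eq_sym (negbTE ne_ji) addn0.
Qed.

End FinsuppProducts.

Section TensorPairing.
Variables (R : comNzRingType) (B : Sym R -> Sym R -> R).
Hypothesis B_linear : forall a x x' y, B (a *: x + x') y = a * B x y + B x' y.

Lemma pair2_left_linear x y : linear_for *%R (pair2_left B x y).
Proof. exact: mmap_linear. Qed.

Lemma pair2_left_linear_l y t : linear_for *%R (fun x => pair2_left B x y t).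
Proof.
move=> a x x'; rewrite /pair2_left mulr_sumr -big_split /=; apply: eq_bigr => k _.
by rewrite B_linear mulrDl mulrDr -mulrA mulrCA.
Qed.

Lemma pair2_left_linear_r x t : linear_for *%R (fun y => pair2_left B x y t).
Proof.
move=> a y y'; rewrite /pair2_left mulr_sumr -big_split /=; apply: eq_bigr => k _.
by rewrite B_linear !mulrDr [B x _ * _]mulrCA [t@_k * (a * _)]mulrCA.
Qed.

Lemma pair2_left_coproduct x y z :
  pair2_left B x y (coproduct z)
    = \sum_(m <- msupp z) z@_m * pair2_left B x y (cop_monom R m).
Proof.
have lin := pair2_left_linear x y.
rewrite /coproduct (big_morph _ (linear_forD lin) (linear_for0 lin)).
by apply: eq_bigr => m _; rewrite (scalable_linear lin).
Qed.

End TensorPairing.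

Section Coproduct.
Variable R : comNzRingType.
Implicit Types (a b m : monom) (t : Sym2 R).

Lemma cop_monom1 : cop_monom R mone = 1.
Proof. by rewrite /cop_monom mdom1 big_seq_fset0. Qed.

Lemma cop_monomMU m i : cop_monom R (mmul m (ucm i)) = prim_image R i * cop_monom R m.
Proof.
rewrite /cop_monom.
apply: (@prod_finsuppMU _ _ (fun j n => prim_image R j ^+ n) _ (fun=> prim_image R i)).
  by move=> j; rewrite expr0.
by move=> n; rewrite exprS.
Qed.

Lemma mcoeffM_prim_l t i a b :
  (t * tens R (ucm i) mone)@_((a, b) : monom2)
    = if (0 < a i)%N then t@_((divcm a (ucm i), b) : monom2) else 0.
Proof.
rewrite mcoeffMl /tens msuppU1.
under eq_bigr => k _ do rewrite big_seq_fset1 mcoeffUU mulr1.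
have eq_k (k : monom2) : (mmul k ((ucm i, mone) : monom2) == ((a, b) : monom2))
    = (0 < a i)%N && (k == ((divcm a (ucm i), b) : monom2)).
  by case: k => k1 k2; rewrite /mmul /= /mul2 /= !xpair_eqE mulm1 mulmU_eq andbA.
under eq_bigr => k _ do rewrite eq_k.
case: (0 < a i)%N; last by rewrite big1.
rewrite -[RHS]mulr1 -(mmap_delta _ (fun=> 1)) mmapE; apply: eq_bigr => k _.
by rewrite mulr1 mulr_natr.
Qed.

Lemma mcoeffM_prim_r t i a b :
  (t * tens R mone (ucm i))@_((a, b) : monom2)
    = if (0 < b i)%N then t@_((a, divcm b (ucm i)) : monom2) else 0.
Proof.
rewrite mcoeffMl /tens msuppU1.
under eq_bigr => k _ do rewrite big_seq_fset1 mcoeffUU mulr1.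
have eq_k (k : monom2) : (mmul k ((mone, ucm i) : monom2) == ((a, b) : monom2))
    = (0 < b i)%N && (k == ((a, divcm b (ucm i)) : monom2)).
  by case: k => k1 k2; rewrite /mmul /= /mul2 /= !xpair_eqE mulm1 mulmU_eq andbCA.
under eq_bigr => k _ do rewrite eq_k.
case: (0 < b i)%N; last by rewrite big1.
rewrite -[RHS]mulr1 -(mmap_delta _ (fun=> 1)) mmapE; apply: eq_bigr => k _.
by rewrite mulr1 mulr_natr.
Qed.

End Coproduct.

Section DiagonalPairing.
Variables (R : comNzRingType) (c : posnat -> R).
Implicit Types (a b m : monom) (x y z : Sym R).

Definition monom_weight m : R := \prod_(i <- finsupp m) ((m i)`!%:R * c i ^+ m i).
Local Notation w := monom_weight.

Lemma monom_weight1 : w mone = 1.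
Proof. by rewrite /monom_weight mdom1 big_seq_fset0. Qed.

Lemma monom_weightMU m i : w (mmul m (ucm i)) = (m i).+1%:R * c i * w m.
Proof.
rewrite /monom_weight.
apply: (@prod_finsuppMU _ _ (fun j n => n`!%:R * c j ^+ n) _ (fun n => n.+1%:R * c i)).
  by move=> j; rewrite fact0 mul1r expr0.
by move=> n; rewrite factS natrM exprS; ring.
Qed.

Definition diag_pairing x y : R := mmap idfun (fun m => y@_m * w m) x.
Local Notation D := diag_pairing.

Lemma diag_pairingEw x y (A : {fset monom}) : (msupp x `<=` A)%fset ->
  D x y = \sum_(m <- A) x@_m * y@_m * w m.
Proof.
by move=> le_xA; rewrite /diag_pairing (mmapEw le_xA); under eq_bigr do rewrite mulrA.
Qed.

Lemma diag_pairingC x y : D x y = D y x.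
Proof.
rewrite (diag_pairingEw y (fsubsetUl (msupp x) (msupp y))).
rewrite (diag_pairingEw x (fsubsetUr (msupp x) (msupp y))).
by apply: eq_bigr => m _; rewrite (mulrC y@_m).
Qed.

Lemma diag_pairing_bilin : bilin_form D.
Proof.
have lin_l (r : R) x x' y : D (r *: x + x') y = r * D x y + D x' y.
  exact: mmap_linear.
by split=> // r x y y'; rewrite !(diag_pairingC x) lin_l.
Qed.

Lemma diag_pairingUr x m : D x << m >> = x@_m * w m.
Proof.
rewrite -mmap_delta /diag_pairing !mmapE; apply: eq_bigr => k _.
by rewrite mcoeffU1 eq_sym.
Qed.

Lemma diag_pairingUU a b : D << a >> << b >> = (a == b)%:R * w a.
Proof. by rewrite diag_pairingC diag_pairingUr mcoeffU1 eq_sym. Qed.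


Lemma monom_weight_divcmU a i : (0 < a i)%N ->
  w a = (a i)%:R * c i * w (divcm a (ucm i)).
Proof. by move=> a_i; rewrite -{1}(divcmUK a_i) monom_weightMU divcmU_succ. Qed.

(* Induction on m: Delta(m v_i) = Delta(m) (v_i (x) 1 + 1 (x) v_i), and the
   two terms contribute the fractions a_i / (m_i + 1) and b_i / (m_i + 1)
   of w(m v_i). *)
Lemma cop_monom_weight m a b :
  (cop_monom R m)@_((a, b) : monom2) * w a * w b = (mmul a b == m)%:R * w m.
Proof.
elim/cmonom_ind: m a b => [|m i IHm] a b.
  rewrite cop_monom1 mcoeff1 monom_weight1.
  have -> : ((a, b) == (mone : monom2)) = (a == mone) && (b == mone) by [].
  rewrite cmM_eq1; case: eqP => [->|_]; case: eqP => [->|_];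
    by rewrite ?monom_weight1 ?mul0r ?mul1r ?mulr1.
set E := mmul a b == mmul m (ucm i).
have term_l : (if (0 < a i)%N then (cop_monom R m)@_((divcm a (ucm i), b) : monom2)
    else 0) * w a * w b = (a i)%:R * c i * (E%:R * w m).
  case: ifP => [a_i|/negbT]; last by rewrite -eqn0Ngt => /eqP ->; rewrite !mul0r.
  by rewrite (monom_weight_divcmU a_i) /E -eq_divcmU_mull // -IHm; ring.
have term_r : (if (0 < b i)%N then (cop_monom R m)@_((a, divcm b (ucm i)) : monom2)
    else 0) * w a * w b = (b i)%:R * c i * (E%:R * w m).
  case: ifP => [b_i|/negbT]; last by rewrite -eqn0Ngt => /eqP ->; rewrite !mul0r.
  by rewrite (monom_weight_divcmU b_i) /E -eq_divcmU_mulr // -IHm; ring.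
rewrite cop_monomMU [prim_image R i * _]mulrC /prim_image mulrDr mcoeffD !mulrDl.
rewrite [X in X * _ * _ + _]mcoeffM_prim_l [X in _ + X * _ * _]mcoeffM_prim_r.
rewrite term_l term_r monom_weightMU.
have [/eqP ab_mi|] := boolP E; last by rewrite !mul0r !mulr0 addr0.
have -> : (m i).+1 = (a i + b i)%N.
  by move: ab_mi => /(congr1 (fun m : monom => m i)); rewrite !cmM cmU eqxx addn1.
by rewrite natrD; ring.
Qed.

Lemma diag_pairing_linear_r x : linear_for *%R (D x).
Proof. by move=> r y y'; case: diag_pairing_bilin => _; apply. Qed.

Lemma diag_pairing_monomM a b m :
  D (<< a >> * << b >>) << m >> = pair2_left D << a >> << b >> (cop_monom R m).
Proof.
have delta_ab (k : monom2) : D << a >> (mono R k.1) * D << b >> (mono R k.2)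
    = (k == ((a, b) : monom2))%:R * (w a * w b).
  case: k => k1 k2; rewrite [X in X * _](diag_pairingUU a k1) [X in _ * X](diag_pairingUU b k2).
  rewrite xpair_eqE (eq_sym k1) (eq_sym k2).
  by case: (a == k1); case: (b == k2); rewrite ?mul0r ?mul1r ?mulr0.
rewrite (_ : pair2_left _ _ _ _
    = mmap idfun (fun k => (k == ((a, b) : monom2))%:R * (w a * w b)) (cop_monom R m)).
  rewrite mmap_delta mulrA cop_monom_weight malgUM diag_pairingUU.
  by case: eqP => [->|]; rewrite ?mul0r.
by apply: eq_bigr => k _; rewrite delta_ab.
Qed.

Lemma diag_pairing_mulE x y z : D (x * y) z = pair2_left D x y (coproduct z).
Proof.
have [lin_l _] := diag_pairing_bilin.
rewrite pair2_left_coproduct (linear_malgE (diag_pairing_linear_r (x * y)) z).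
apply: eq_bigr => m _; congr (_ * _); move: x.
apply: (linear_malg_eq (f := fun u : Sym R => D (u * y) << m >>)
                       (g := fun u : Sym R => pair2_left D u y (cop_monom R m))).
- by move=> r u v; rewrite mulrDl -scalerAl lin_l.
- exact: (pair2_left_linear_l lin_l).
move=> a; move: y.
apply: (linear_malg_eq (f := fun v : Sym R => D (<< a >> * v) << m >>)
                       (g := fun v : Sym R => pair2_left D << a >> v (cop_monom R m))).
- by move=> r u v; rewrite mulrDr -scalerAr lin_l.
- exact: (pair2_left_linear_r lin_l).
move=> b; exact: (diag_pairing_monomM a b m).
Qed.

Lemma diag_pairing1l z : D 1 z = counit z.
Proof.
by rewrite -mpolyC1E diag_pairingC diag_pairingUr monom_weight1 mulr1.
Qed.

Lemma diag_pairing_hopf : hopf_pairing D.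
Proof.
split=> [x y z|x y z|z|x].
- exact: diag_pairing_mulE.
- rewrite diag_pairingC diag_pairing_mulE; apply: eq_bigr => k _.
  by rewrite (diag_pairingC y) (diag_pairingC z).
- exact: diag_pairing1l.
- by rewrite diag_pairingC diag_pairing1l.
Qed.

Lemma diag_pairing_graded deg : graded_pairing deg D.
Proof.
move=> n n' x y hx hy ne_nn'; rewrite (diag_pairingEw y (fsubset_refl (msupp x))).
rewrite big1_fset // => m m_x _; have [m_y|m_y] := boolP (m \in msupp y).
  by case: ne_nn'; rewrite -(hx m m_x) -(hy m m_y).
by rewrite (mcoeff_outdom m_y) mulr0 mul0r.
Qed.

End DiagonalPairing.

Lemma monom_weight_neq0 (R : numDomainType) (c : posnat -> R) :
  (forall i, c i != 0) -> forall m, monom_weight c m != 0.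
Proof.
move=> c_neq0 m; rewrite prodf_seq_neq0; apply/allP => i _ /=.
by rewrite mulf_neq0 ?expf_neq0 // pnatr_eq0 -lt0n fact_gt0.
Qed.

Lemma diag_pairing_nondeg (R : numDomainType) (c : posnat -> R) :
  (forall i, c i != 0) -> nondeg_pairing (diag_pairing c).
Proof.
move=> c_neq0; have nondeg_l x : (forall y, diag_pairing c x y = 0) -> x = 0.
  move=> x_perp; apply/malgP => m; have /eqP := x_perp << m >>.
  rewrite diag_pairingUr mcoeff0 mulf_eq0 (negbTE (monom_weight_neq0 c_neq0 m)) orbF.
  by move/eqP.
by split=> // y y_perp; apply: nondeg_l => x; rewrite diag_pairingC.
Qed.

Section BilinearForms.
Variables (R : comNzRingType) (B : Sym R -> Sym R -> R).
Hypothesis B_bilin : bilin_form B.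

Lemma bilin_formZ a b x y : B (a *: x) (b *: y) = a * b * B x y.
Proof.
case: B_bilin => Bl Br.
have /= BZl := scalable_linear (f := fun u => B u (b *: y)) (fun r u v => Bl r u v _).
have BZr := scalable_linear (f := B x) (fun r u v => Br r x u v).
by rewrite BZl BZr mulrA.
Qed.

Lemma bilin_form_eq B' : bilin_form B' ->
  (forall a b, B << a >> << b >> = B' << a >> << b >>) -> B =2 B'.
Proof.
case: B_bilin => Bl Br [B'l B'r] eqU x y; move: x.
apply: (linear_malg_eq (f := fun x : Sym R => B x y) (g := fun x : Sym R => B' x y)).
- by move=> r u v; apply: Bl.
- by move=> r u v; apply: B'l.
move=> a; move: y.
apply: (linear_malg_eq (f := fun y : Sym R => B << a >> y) (g := fun y : Sym R => B' << a >> y)).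
- by move=> r u v; apply: Br.
- by move=> r u v; apply: B'r.
exact: eqU.
Qed.

End BilinearForms.

Lemma vbarE (R : comNzRingType) (al : composition) :
  vbar R al = << cmonom_of_seq al >>.
Proof.
elim: al => [|i al IHal]; first by rewrite /vbar /cmonom_of_seq !big_nil -mpolyC1E.
rewrite /vbar big_cons -/(vbar R al) IHal cmonom_of_seq_cons.
exact: malgUM.
Qed.

Lemma sortc_eq (al be : composition) : (sortc al == sortc be) = perm_eq al be.
Proof.
have geq_total : total (fun a b : nat => (b <= a)%N) by move=> a b; apply: leq_total.
have geq_trans : transitive (fun a b : nat => (b <= a)%N).
  by move=> b a c ba cb; apply: leq_trans cb ba.
have geq_anti : antisymmetric (fun a b : nat => (b <= a)%N).
  by move=> a b; rewrite andbC => /anti_leq.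
apply/eqP/idP => [/(perm_sortP geq_total geq_trans geq_anti)|perm_ab].
  exact/perm_map_inj/val_inj.
by apply/(perm_sortP geq_total geq_trans geq_anti)/perm_map.
Qed.

Section SelfDualNormalisation.
Variables (R : rcfType) (deg : posnat -> nat).
Implicit Types (al be : composition).

Definition self_dual_weight i : R := (val i)%:R / (deg i)`!%:R ^+ 2.

Local Notation D := (diag_pairing self_dual_weight).

Lemma self_dual_weight_neq0 i : self_dual_weight i != 0.
Proof.
rewrite mulf_neq0 ?invr_eq0 ?expf_neq0 // pnatr_eq0 -lt0n ?fact_gt0 //.
exact: (valP i).
Qed.

Lemma zee_finsupp al : zee al =
  (\prod_(j <- finsupp (cmonom_of_seq al))
     ((cmonom_of_seq al j)`! * val j ^ cmonom_of_seq al j))%N.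
Proof.
rewrite /zee; under eq_bigr => j _ do rewrite -cmonom_of_seqE.
exact: perm_big (perm_undup_finsupp al).
Qed.

Lemma deg_fact_finsupp al : deg_fact deg al =
  (\prod_(j <- finsupp (cmonom_of_seq al)) (deg j)`! ^ cmonom_of_seq al j)%N.
Proof.
rewrite /deg_fact -big_undup_iterop_count.
under eq_bigr => j _ do rewrite Monoid.iteropE iter_muln_1 -cmonom_of_seqE.
exact: perm_big (perm_undup_finsupp al).
Qed.

Lemma zee_gt0 al : (0 < zee al)%N.
Proof. by apply: prodn_gt0 => j; rewrite muln_gt0 fact_gt0 expn_gt0 (valP j). Qed.

Lemma deg_fact_gt0 al : (0 < deg_fact deg al)%N.
Proof. by apply: prodn_gt0 => j; rewrite fact_gt0. Qed.

Lemma monom_weight_of_seq al : monom_weight self_dual_weight (cmonom_of_seq al)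
  = (zee al)%:R / (deg_fact deg al)%:R ^+ 2.
Proof.
rewrite zee_finsupp deg_fact_finsupp !natr_prod -prodrXl -prodf_div.
apply: eq_bigr => j _; rewrite /self_dual_weight natrM !natrX exprMn exprVn -mulrA.
by rewrite exprAC.
Qed.

Definition nvbar_scale al : R := (deg_fact deg al)%:R / Num.sqrt (zee al)%:R.

Lemma nvbarE al : nvbar R deg al = nvbar_scale al *: << cmonom_of_seq al >>.
Proof. by rewrite /nvbar vbarE. Qed.

Lemma nvbar_scale_neq0 al : nvbar_scale al != 0.
Proof.
rewrite mulf_neq0 ?invr_eq0 ?pnatr_eq0 -?lt0n ?deg_fact_gt0 //.
by rewrite sqrtr_eq0 -ltNge ltr0n zee_gt0.
Qed.

Lemma nvbar_scale_perm al be : perm_eq al be -> nvbar_scale al = nvbar_scale be.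
Proof.
move=> perm_ab; rewrite /nvbar_scale /deg_fact (perm_big _ perm_ab) !zee_finsupp.
suff -> : cmonom_of_seq al = cmonom_of_seq be by [].
by apply/eqP; rewrite eq_cmonom_of_seq.
Qed.

Lemma nvbar_scale_weight al :
  nvbar_scale al * nvbar_scale al * monom_weight self_dual_weight (cmonom_of_seq al) = 1.
Proof.
rewrite monom_weight_of_seq /nvbar_scale.
have z_gt0 : 0 < ((zee al)%:R : R) by rewrite ltr0n zee_gt0.
have d_neq0 : ((deg_fact deg al)%:R : R) != 0 by rewrite pnatr_eq0 -lt0n deg_fact_gt0.
have sqrt_neq0 : Num.sqrt ((zee al)%:R : R) != 0 by rewrite sqrtr_eq0 -ltNge.
rewrite -[X in X / _ ^+ 2](sqr_sqrtr (ltW z_gt0)).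
by field; rewrite d_neq0 sqrt_neq0.
Qed.

Lemma diag_pairing_nvbar al be :
  D (nvbar R deg al) (nvbar R deg be) = (sortc al == sortc be)%:R.
Proof.
rewrite !nvbarE (bilin_formZ (diag_pairing_bilin _)).
rewrite (diag_pairingUU _ (cmonom_of_seq al)) eq_cmonom_of_seq -sortc_eq.
have [eq_sort|_] := eqVneq (sortc al) (sortc be); last by rewrite mul0r mulr0.
have perm_ab : perm_eq al be by rewrite -sortc_eq eq_sort.
by rewrite -(nvbar_scale_perm perm_ab) mul1r nvbar_scale_weight.
Qed.

Lemma nvbar_orthonormal_unique (B : Sym R -> Sym R -> R) : bilin_form B ->
  (forall al be, B (nvbar R deg al) (nvbar R deg be) = (sortc al == sortc be)%:R) ->
  B =2 D.
Proof.
move=> B_bilin B_nvbar; apply: (bilin_form_eq B_bilin (diag_pairing_bilin _)) => a b.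
have [al ->] := cmonom_of_seq_surj a; have [be ->] := cmonom_of_seq_surj b.
have monomE ga : << cmonom_of_seq ga >> = (nvbar_scale ga)^-1 *: nvbar R deg ga.
  by rewrite nvbarE scalerA mulVf ?nvbar_scale_neq0 // scale1r.
rewrite !monomE (bilin_formZ B_bilin) (bilin_formZ (diag_pairing_bilin _)).
by rewrite B_nvbar diag_pairing_nvbar.
Qed.

End SelfDualNormalisation.

Theorem mainTheorem7 (R : rcfType) (deg : posnat -> nat) :
  grading_ok deg ->
  (exists B : Sym R -> Sym R -> R, bilin_form B /\
     forall alpha beta : composition,
       B (nvbar R deg alpha) (nvbar R deg beta) = (sortc alpha == sortc beta)%:R) /\
  (forall B : Sym R -> Sym R -> R, bilin_form B ->
     (forall alpha beta : composition,
        B (nvbar R deg alpha) (nvbar R deg beta) = (sortc alpha == sortc beta)%:R) ->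
     [/\ hopf_pairing B, nondeg_pairing B & graded_pairing deg B]).
Proof.
move=> _; split.
  exists (diag_pairing (self_dual_weight R deg)).
  by split; [exact: diag_pairing_bilin | exact: diag_pairing_nvbar].
move=> B B_bilin B_nvbar.
have -> : B = diag_pairing (self_dual_weight R deg).
  apply: functional_extensionality => x; apply: functional_extensionality => y.
  exact: nvbar_orthonormal_unique.
split; [exact: diag_pairing_hopf | | exact: diag_pairing_graded].
exact/diag_pairing_nondeg/self_dual_weight_neq0.
Qed.
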